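(* Let $\delta_1,\delta_2\in\mathcal{D}^{LSL}$ with $\delta_1\ne\delta_2$ and let $\lambda\in(0,1)$. Then $$\tau\big(\lambda S_{\delta_1}+(1-\lambda)S_{\delta_2}\big)<\lambda\,\tau(S_{\delta_1})+(1-\lambda)\,\tau(S_{\delta_2}).$$
   Context: Let $\mathcal{D}$ be the set of all functions $\delta:[0,1]\to[0,1]$ with $\delta(u)\le u$, $\delta(1)=1$, $\delta$ non-decreasing and 2-Lipschitz. Let $\mathcal{D}^{LSL}$ be the set of $\delta\in\mathcal{D}$ such that $x\mapsto\delta(x)/x$ is non-decreasing and $x\mapsto\delta(x)/x^2$ is non-increasing on $(0,1]$. For $\delta\in\mathcal{D}^{LSL}$, $S_\delta(x,y)=y\,\delta(x)/x$ if $y\le x$ and $x\,\delta(y)/y$ otherwise (convention $0/0:=0$); it is a copula. For a copula $C$ with associated doubly stochastic measure $\mu_C$ (so $\mu_C([0,x]\times[0,y])=C(x,y)$), Kendall's tau is $\tau(C)=4\int_{[0,1]^2}C\,d\mu_C-1$. *)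

From HB Require Import structures.
From mathcomp Require Import all_boot all_order all_algebra.
From mathcomp Require Import all_classical all_reals all_analysis.
Set Implicit Arguments. Unset Strict Implicit. Unset Printing Implicit Defensive.
Import Order.TTheory GRing.Theory Num.Theory.
Local Open Scope classical_set_scope.
Local Open Scope ring_scope.

Section Defs.
Variable R : realType.

(* delta in the class D (only the values on [0,1] matter) *)
Definition in_D (d : R -> R) : Prop :=
  [/\ (forall u, 0 <= u <= 1 -> 0 <= d u <= 1),
      (forall u, 0 <= u <= 1 -> d u <= u),
      d 1 = 1,
      (forall u v, 0 <= u -> u <= v -> v <= 1 -> d u <= d v) &
      (forall u v, 0 <= u <= 1 -> 0 <= v <= 1 -> `|d u - d v| <= 2 * `|u - v|)].

Definition in_DLSL (d : R -> R) : Prop :=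
  [/\ in_D d,
      (forall x y, 0 < x -> x <= y -> y <= 1 -> d x / x <= d y / y) &
      (forall x y, 0 < x -> x <= y -> y <= 1 -> d y / (y ^+ 2) <= d x / (x ^+ 2))].

(* S_delta; note x / 0 = 0 in MathComp, matching the convention 0/0 := 0 *)
Definition S_delta (d : R -> R) (x y : R) : R :=
  if y <= x then y * (d x / x) else x * (d y / y).

Definition mixC (l : R) (C1 C2 : R -> R -> R) (x y : R) : R :=
  l * C1 x y + (1 - l) * C2 x y.

Definition unit_sq : set (R * R) := `[0, 1] `*` `[0, 1].

Definition assoc_measure (mu : {measure set (R * R)%type -> \bar R})
  (C : R -> R -> R) : Prop :=
  mu setT = 1%E /\
  forall x y, 0 <= x <= 1 -> 0 <= y <= 1 ->
    mu (`[0, x] `*` `[0, y]) = (C x y)%:E.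

Definition kendall_tau (mu : {measure set (R * R)%type -> \bar R})
  (C : R -> R -> R) : R :=
  4 * Rintegral mu unit_sq (fun z => C z.1 z.2) - 1.

End Defs.

(* Write Q_n(f, C) for the Stieltjes sum of f against the C-volumes of the
   cells of the uniform n x n grid.  Every S_delta with delta in D^LSL, and
   every convex combination of such copulas, is 1-Lipschitz in each variable,
   so Q_n(C, C) approximates int C dmu_C within 2/n.  Since Q_n is bilinear,
     l Q_n(S1, S1) + (1 - l) Q_n(S2, S2) - Q_n(S, S) = l (1 - l) Q_n(D, D)
   for S = l S1 + (1 - l) S2 and D = S1 - S2.  On the grid D(a/n, b/n) is
   min(a, b)/n * h(max(a, b)/n), h being the difference of the slopes
   delta_i(t)/t, and for such kernels Q_n(D, D) telescopes to
   n^-2 sum_k k h(k/n)^2.  The LSL conditions give 0 <= s(y) - s(x) <= (y - x)/x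
   for each slope s, so h stays away from 0 on a left neighbourhood of a point
   where delta1 and delta2 differ.  Hence Q_n(D, D) is bounded below by a
   constant independent of n, and for n large this gap beats the 4/n
   approximation error. *)
From HB Require Import structures.
From mathcomp Require Import all_boot all_order all_algebra.
From mathcomp Require Import all_classical all_reals all_analysis.
From mathcomp Require Import measurable_realfun ring lra.
Set Implicit Arguments. Unset Strict Implicit. Unset Printing Implicit Defensive.
Import Order.TTheory GRing.Theory Num.Theory.
Local Open Scope classical_set_scope.
Local Open Scope ring_scope.

Section Slope.
Variable R : realType.
Implicit Types (d : R -> R) (x y : R).

Definition slope d x := d x / x.

Lemma slope0 d : slope d 0 = 0.
Proof. by rewrite /slope invr0 mulr0. Qed.

Lemma in_D0 d : in_D d -> d 0 = 0.
Proof.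
case=> d01 d_le _ _ _; have h01 : 0 <= (0 : R) <= 1 by rewrite lexx ler01.
by apply/eqP; rewrite eq_le d_le //=; case/andP: (d01 0 h01).
Qed.

Lemma slope_in01 d x : in_D d -> 0 <= x <= 1 -> 0 <= slope d x <= 1.
Proof.
case=> d01 d_le _ _ _ x01; have /andP[x0 _] := x01.
have /andP[dx0 _] := d01 x x01; have dxx := d_le x x01.
have [->|x_neq0] := eqVneq x 0; first by rewrite slope0 lexx ler01.
have x_gt0 : 0 < x by rewrite lt_neqAle eq_sym x_neq0.
by rewrite divr_ge0 // ler_pdivrMr // mul1r.
Qed.
Arguments slope_in01 {d x}.

Section LSL.
Variable d : R -> R.
Hypothesis dLSL : in_DLSL d.

Let dD : in_D d. Proof. by case: dLSL. Qed.

Lemma slope_nondecr {x y} : 0 <= x -> x <= y -> y <= 1 -> slope d x <= slope d y.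
Proof.
case: dLSL => _ mono _ x0 xy y1; have [->|x_neq0] := eqVneq x 0.
  have y01 : 0 <= y <= 1 by rewrite (le_trans x0 xy).
  by rewrite slope0; case/andP: (slope_in01 dD y01).
by apply: mono; rewrite // lt_neqAle eq_sym x_neq0.
Qed.

Lemma slope_mul_le {x y} : 0 < x -> x <= y -> y <= 1 -> slope d y * x <= slope d x * y.
Proof.
case: dLSL => _ _ antimono x0 xy y1; have y0 := lt_le_trans x0 xy.
have -> : slope d y * x = d y / y ^+ 2 * (x * y) by rewrite /slope; field; rewrite gt_eqF.
have -> : slope d x * y = d x / x ^+ 2 * (x * y) by rewrite /slope; field; rewrite gt_eqF.
by rewrite ler_wpM2r ?antimono // mulr_ge0 // ltW.
Qed.

Lemma slope_increment {x y} : 0 < x -> x <= y -> y <= 1 ->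
  0 <= slope d y - slope d x <= (y - x) / x.
Proof.
move=> x0 xy y1; have := slope_mul_le x0 xy y1.
have /andP[_ sx1] : 0 <= slope d x <= 1 by rewrite slope_in01 // ltW //= (le_trans xy).
rewrite subr_ge0 (slope_nondecr (ltW x0) xy y1) /= ler_pdivlMr //; nra.
Qed.

Lemma S_delta_increment x x' y : 0 <= x -> x <= x' -> x' <= 1 -> 0 <= y <= 1 ->
  0 <= S_delta d x' y - S_delta d x y <= x' - x.
Proof.
move=> x0 xx' x'1 y01; have /andP[y0 y1] := y01; rewrite /S_delta -!/(slope d _).
have x01 : 0 <= x <= 1 by rewrite x0 (le_trans xx').
have /andP[sy0 sy1] := slope_in01 dD y01.
case: (lerP y x) => yx; case: (lerP y x') => yx'.
- have [x_eq0|x_neq0] := eqVneq x 0.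
    have -> : y = 0 by apply/eqP; rewrite eq_le y0 -x_eq0 yx.
    by rewrite !mul0r subrr lexx subr_ge0.
  have x_gt0 : 0 < x by rewrite lt_neqAle eq_sym x_neq0.
  have := slope_nondecr x0 xx' x'1; have := slope_mul_le x_gt0 xx' x'1.
  have /andP[sx0 sx1] := slope_in01 dD x01.
  by move=> *; apply/andP; split; nra.
- by have := lt_le_trans yx' (le_trans yx xx'); rewrite ltxx.
- have y_gt0 : 0 < y by apply: le_lt_trans yx.
  have := slope_nondecr y0 yx' x'1; have := slope_mul_le y_gt0 yx' x'1.
  by move=> *; apply/andP; split; nra.
- by apply/andP; split; nra.
Qed.

End LSL.
End Slope.

Section UnitSquare.
Variable R : realType.
Implicit Types f g C : R -> R -> R.

Definition sq_nonneg f := forall x y, 0 <= x <= 1 -> 0 <= y <= 1 -> 0 <= f x y.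

Definition sq_lipschitz f := forall x y x' y',
  0 <= x <= 1 -> 0 <= y <= 1 -> 0 <= x' <= 1 -> 0 <= y' <= 1 ->
  `|f x y - f x' y'| <= `|x - x'| + `|y - y'|.

Definition grounded C := (forall y, C 0 y = 0) /\ (forall x, C x 0 = 0).

Variable l : R.
Hypothesis l01 : 0 <= l <= 1.

Lemma mixC_nonneg f g : sq_nonneg f -> sq_nonneg g -> sq_nonneg (mixC l f g).
Proof.
have /andP[l0 l1] := l01; move=> f0 g0 x y x01 y01.
by rewrite /mixC addr_ge0 // mulr_ge0 ?subr_ge0 ?f0 ?g0.
Qed.

Lemma mixC_lipschitz f g : sq_lipschitz f -> sq_lipschitz g -> sq_lipschitz (mixC l f g).
Proof.
have /andP[l0 l1] := l01; move=> fL gL x y x' y' x01 y01 x'01 y'01.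
have := fL _ _ _ _ x01 y01 x'01 y'01; have := gL _ _ _ _ x01 y01 x'01 y'01.
have -> : mixC l f g x y - mixC l f g x' y' =
  l * (f x y - f x' y') + (1 - l) * (g x y - g x' y') by rewrite /mixC; ring.
set a := f x y - _; set b := g x y - _ => gb fa.
apply: (le_trans (ler_normD _ _)).
rewrite !normrM (ger0_norm l0) [`|1 - l|]ger0_norm ?subr_ge0 //.
have : l * `|a| <= l * (`|x - x'| + `|y - y'|) by rewrite ler_wpM2l.
have : (1 - l) * `|b| <= (1 - l) * (`|x - x'| + `|y - y'|) by rewrite ler_wpM2l ?subr_ge0.
lra.
Qed.

Lemma mixC_grounded f g : grounded f -> grounded g -> grounded (mixC l f g).
Proof.
by move=> [f0 f0'] [g0 g0']; split=> t; rewrite /mixC ?f0 ?g0 ?f0' ?g0' !mulr0 addr0.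
Qed.

End UnitSquare.

Section SDelta.
Variable R : realType.
Implicit Types d : R -> R.

Lemma S_deltaC d x y : S_delta d x y = S_delta d y x.
Proof.
rewrite /S_delta; case: (lerP y x) => yx; case: (lerP x y) => xy //.
- by have -> : x = y by apply/eqP; rewrite eq_le xy yx.
- by have := lt_trans yx xy; rewrite ltxx.
Qed.

Lemma S_delta_minmax d x y : S_delta d x y = Num.min x y * slope d (Num.max x y).
Proof. by rewrite /S_delta /slope; case: (lerP y x). Qed.

Lemma S_delta_grounded d : grounded (S_delta d).
Proof.
by split=> t; rewrite /S_delta -!/(slope d _) slope0; case: ifP; rewrite ?mulr0 ?mul0r.
Qed.

Lemma S_delta_nonneg d : in_D d -> sq_nonneg (S_delta d).
Proof.
move=> dD x y /andP[x0 x1] /andP[y0 y1].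
have max01 : 0 <= Num.max x y <= 1 by rewrite le_max x0 ge_max x1 y1.
have /andP[s0 _] := slope_in01 dD max01.
by rewrite S_delta_minmax mulr_ge0 // le_min x0 y0.
Qed.

Lemma S_delta_lipschitz d : in_DLSL d -> sq_lipschitz (S_delta d).
Proof.
move=> dLSL.
have lip1 x x' y : 0 <= x <= 1 -> 0 <= x' <= 1 -> 0 <= y <= 1 ->
    `|S_delta d x y - S_delta d x' y| <= `|x - x'|.
  move=> /andP[x0 x1] /andP[x'0 x'1] y01; case: (leP x x') => xx'.
    have /andP[a b] := S_delta_increment dLSL x0 xx' x'1 y01.
    by rewrite distrC (ger0_norm a) distrC ger0_norm // subr_ge0.
  have /andP[a b] := S_delta_increment dLSL x'0 (ltW xx') x1 y01.
  by rewrite (ger0_norm a) ger0_norm // subr_ge0 ltW.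
move=> x y x' y' x01 y01 x'01 y'01.
have -> : S_delta d x y - S_delta d x' y' =
  (S_delta d x y - S_delta d x' y) + (S_delta d y x' - S_delta d y' x')
  by rewrite (S_deltaC d y') (S_deltaC d y); ring.
by apply: (le_trans (ler_normD _ _)); rewrite lerD ?lip1.
Qed.

Lemma measurable_S_delta d : in_DLSL d ->
  measurable_fun (@unit_sq R) (fun z => S_delta d z.1 z.2).
Proof.
move=> dLSL; pose clamp t : R := Num.min (Num.max t 0) 1.
have clamp_nondecr : {homo slope d \o clamp : s t / s <= t}.
  move=> s t st; apply: (slope_nondecr dLSL).
  - by rewrite le_min ler01 le_max lexx orbT.
  - by rewrite le_min2 // le_max2.
  - by rewrite ge_min lexx orbT.
have mfst : measurable_fun (@unit_sq R) fst by exact: measurable_funTS measurable_fst.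
have msnd : measurable_fun (@unit_sq R) snd by exact: measurable_funTS measurable_snd.
pose F (z : R * R) := Num.min z.1 z.2 * (slope d \o clamp) (Num.max z.1 z.2).
apply: (@eq_measurable_fun _ _ _ _ _ F).
  move=> [x y]; rewrite inE => -[/=]; rewrite !in_itv /= => /andP[x0 x1] /andP[y0 y1].
  have max0 : 0 <= Num.max x y by rewrite le_max x0.
  have max1 : Num.max x y <= 1 by rewrite ge_max x1 y1.
  by rewrite S_delta_minmax /F /clamp /= (max_l max0) (min_l max1).
apply: measurable_funM; first exact: measurable_minr.
apply: measurableT_comp; first exact: nondecreasing_measurable.
exact: measurable_maxr.
Qed.

End SDelta.

Section SetXBig.
Variables (I T1 T2 : Type) (s : seq I).

Lemma big_setUXl (F : I -> set T1) (B : set T2) :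
  \big[setU/set0]_(i <- s) (F i `*` B) = (\big[setU/set0]_(i <- s) F i) `*` B.
Proof.
elim: s => [|a s' IH]; first by rewrite !big_nil set0X.
by rewrite !big_cons IH; apply/seteqP; split=> -[x y] /=; rewrite /setU /setX /=; tauto.
Qed.

Lemma big_setUXr (A : set T1) (F : I -> set T2) :
  \big[setU/set0]_(i <- s) (A `*` F i) = A `*` \big[setU/set0]_(i <- s) F i.
Proof.
elim: s => [|a s' IH]; first by rewrite !big_nil setX0.
by rewrite !big_cons IH; apply/seteqP; split=> -[x y] /=; rewrite /setU /setX /=; tauto.
Qed.

End SetXBig.

Section Grid.
Variables (R : realType) (n : nat).
Hypothesis n_gt0 : (0 < n)%N.

Definition grid (k : nat) : R := k%:R / n%:R.

(* The prefix of index 0 is empty rather than [0, 0], so that 0 lies in cell 0. *)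
Definition grid_prefix (k : nat) : set R := if k is 0 then set0 else `[0, grid k].

Definition cell (k : nat) : set R := grid_prefix k.+1 `\` grid_prefix k.

Let n_gt0R : 0 < n%:R :> R. Proof. by rewrite ltr0n. Qed.

Lemma grid0 : grid 0 = 0. Proof. by rewrite /grid mul0r. Qed.

Lemma grid_ge0 k : 0 <= grid k. Proof. by rewrite /grid divr_ge0. Qed.

Lemma grid_le a b : (a <= b)%N -> grid a <= grid b.
Proof. by move=> ab; rewrite /grid ler_wpM2r ?invr_ge0 // ler_nat. Qed.

Lemma grid_le1 k : (k <= n)%N -> grid k <= 1.
Proof. by move=> kn; rewrite -(divff (lt0r_neq0 n_gt0R)) grid_le. Qed.

Lemma gridS k : grid k.+1 = grid k + n%:R^-1.
Proof. by rewrite /grid -natr1 mulrDl mul1r. Qed.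

Lemma grid_prefix_n : grid_prefix n = `[0, 1]%classic.
Proof.
have /prednK <- := n_gt0.
by rewrite /= prednK // /grid divff // lt0r_neq0.
Qed.

Lemma measurable_grid_prefix k : measurable (grid_prefix k).
Proof. by case: k => [|k]; [exact: measurable0 | exact: measurable_itv]. Qed.

Lemma measurable_cell k : measurable (cell k).
Proof. exact: measurableD (measurable_grid_prefix _) (measurable_grid_prefix _). Qed.

Lemma grid_prefix_sub a b : (a <= b)%N -> grid_prefix a `<=` grid_prefix b.
Proof.
case: a => [|a] ab; first exact: sub0set.
case: b ab => [//|b] ab x /=; rewrite !in_itv /= => /andP[x0 xa].
by rewrite x0 (le_trans xa) // grid_le.
Qed.

Lemma cell_sub01 k : (k < n)%N -> cell k `<=` `[0, 1]%classic.
Proof. by move=> kn x [xk _]; rewrite -grid_prefix_n; exact: grid_prefix_sub kn _ xk. Qed.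

Lemma cell_near_grid k x : (k < n)%N -> cell k x ->
  0 <= x <= 1 /\ `|x - grid k.+1| <= n%:R^-1.
Proof.
move=> kn xk; split; first by have := cell_sub01 kn xk; rewrite /= in_itv.
case: xk; rewrite /= in_itv /= => /andP[x0 xk1] xNk.
have xk : grid k <= x.
  case: k xNk {kn xk1} => [|k] xNk; first by rewrite grid0.
  by rewrite leNgt; apply/negP => /ltW xk; apply: xNk; rewrite /= in_itv /= x0.
move: xk1; rewrite ler_norml gridS; lra.
Qed.

Lemma cells_disjoint i j : cell i `&` cell j !=set0 -> i = j.
Proof.
have disj a b : (a < b)%N -> ~ (cell a `&` cell b !=set0).
  by move=> ab [x [[xa _] [_ xNb]]]; exact/xNb/(grid_prefix_sub ab).
by move=> ij; case: (ltngtP i j) => // [/disj|/disj]; last rewrite setIC; move/(_ ij).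
Qed.

Lemma big_setU_cell m : \big[setU/set0]_(0 <= k < m) cell k = grid_prefix m.
Proof.
elim: m => [|m IH]; first by rewrite big_geq.
by rewrite big_nat_recr // IH [LHS]/= /cell setDUK //; exact: grid_prefix_sub.
Qed.

End Grid.

Lemma S_delta_grid {R : realType} (d : R -> R) n a b : (0 < n)%N ->
  S_delta d (grid R n a) (grid R n b) = grid R n (minn a b) * slope d (grid R n (maxn a b)).
Proof.
move=> n_gt0; rewrite /S_delta -!/(slope _ _) {1}/grid ler_pM2r ?invr_gt0 ?ltr0n // ler_nat.
by case: (leqP b a).
Qed.

Section ProbabilityOnSquare.
Variable R : realType.
Local Notation T := (R * R)%type.
Variable mu : {measure set T -> \bar R}.
Hypothesis mu_setT : mu setT = 1%E.

Lemma measure_fin_num (A : set T) : measurable A -> mu A \is a fin_num.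
Proof.
move=> mA; rewrite ge0_fin_numE // (le_lt_trans _ (ltry 1)) // -mu_setT.
by rewrite le_measure ?inE.
Qed.

Lemma fine_measureD (X X' : set T) : measurable X -> measurable X' -> X' `<=` X ->
  fine (mu (X `\` X')) = fine (mu X) - fine (mu X').
Proof.
move=> mX mX' X'X; have /fin_numPlt/andP[_ muX] := measure_fin_num mX.
by rewrite measureD // (setIidr X'X) fineB // measure_fin_num.
Qed.

Lemma fine_measure_setXD (A A' B B' : set R) :
  measurable A -> measurable A' -> measurable B -> measurable B' ->
  A' `<=` A -> B' `<=` B ->
  fine (mu ((A `\` A') `*` (B `\` B'))) =
  fine (mu (A `*` B)) - fine (mu (A' `*` B)) - fine (mu (A `*` B')) + fine (mu (A' `*` B')).
Proof.
move=> mA mA' mB mB' A'A B'B.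
have setXDl (Y : set R) : (A `\` A') `*` Y = A `*` Y `\` A' `*` Y.
  by apply/seteqP; split=> -[x y] /=; rewrite /setD /setX /=; tauto.
have setXDr : (A `\` A') `*` (B `\` B') = (A `\` A') `*` B `\` (A `\` A') `*` B'.
  by apply/seteqP; split=> -[x y] /=; rewrite /setD /setX /=; tauto.
have mD := measurableD mA mA'.
rewrite setXDr fine_measureD; try exact: measurableX; last exact: setSX.
rewrite !setXDl !fine_measureD; try exact: measurableX; try exact: setSX.
ring.
Qed.

Lemma integral_near_const (A : set T) (g : T -> R) (c e : R) : measurable A ->
  measurable_fun A g -> (forall z, A z -> 0 <= g z) ->
  (forall z, A z -> `|g z - c| <= e) ->
  (\int[mu]_(z in A) (g z)%:E)%E \is a fin_num /\
  `|fine (\int[mu]_(z in A) (g z)%:E)%E - c * fine (mu A)| <= e * fine (mu A).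
Proof.
move=> mA mg g0 gce; set m := fine (mu A).
have m0 : 0 <= m by apply: fine_ge0.
have muA : mu A = m%:E by rewrite fineK // measure_fin_num.
have mgE : measurable_fun A (EFin \o g) by apply/measurable_EFinP.
have up : (\int[mu]_(z in A) (g z)%:E <= ((c + e) * m)%:E)%E.
  rewrite EFinM -muA -integral_cst //; apply: ge0_le_integral => // z Az.
  by move: (gce _ Az); rewrite lee_fin ler_norml; lra.
have lo : ((Num.max (c - e) 0 * m)%:E <= \int[mu]_(z in A) (g z)%:E)%E.
  rewrite EFinM -muA -integral_cst //; apply: ge0_le_integral => // z Az; rewrite lee_fin.
    by rewrite le_max lexx orbT.
  by move: (gce _ Az); rewrite ge_max g0 // andbT ler_norml; lra.
have fin : (\int[mu]_(z in A) (g z)%:E)%E \is a fin_num.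
  rewrite ge0_fin_numE ?(le_lt_trans up (ltry _)) //.
  by apply: integral_ge0 => z Az; rewrite lee_fin g0.
split => //; rewrite -(fineK fin) !lee_fin in up lo.
have : (c - e) * m <= Num.max (c - e) 0 * m by rewrite ler_wpM2r // le_max lexx.
by rewrite ler_norml => ?; apply/andP; split; lra.
Qed.

End ProbabilityOnSquare.

Definition C_volume {R : realType} (C : R -> R -> R) (x x' y y' : R) : R :=
  C x' y' - C x y' - C x' y + C x y.

Definition stieltjes_sum {R : realType} (n : nat) (f C : R -> R -> R) : R :=
  \sum_(0 <= i < n) \sum_(0 <= j < n) f (grid R n i.+1) (grid R n j.+1) *
    C_volume C (grid R n i) (grid R n i.+1) (grid R n j) (grid R n j.+1).

Section RiemannStieltjes.
Variables (R : realType) (n : nat).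
Hypothesis n_gt0 : (0 < n)%N.
Variable mu : {measure set (R * R) -> \bar R}.
Hypothesis mu_setT : mu setT = 1%E.
Local Notation grid := (@grid R n).
Local Notation cell := (@cell R n).
Local Notation sq := (@unit_sq R).

Let measurable_cells i j : measurable (cell i `*` cell j).
Proof. by apply: measurableX; exact: measurable_cell. Qed.

Let unit_sq_cells : sq = \big[setU/set0]_(0 <= i < n) (cell i `*` `[0, 1]%classic).
Proof. by rewrite big_setUXl big_setU_cell // grid_prefix_n. Qed.

Lemma integral_unit_sq_cells (f : R * R -> R) : measurable_fun sq f ->
  (\int[mu]_(z in sq) (f z)%:E =
   \sum_(0 <= i < n) \sum_(0 <= j < n) \int[mu]_(z in cell i `*` cell j) (f z)%:E)%E.
Proof.
move=> mf; rewrite unit_sq_cells integral_bigsetU_EFin ?iota_uniq //; first last.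
- by rewrite -unit_sq_cells; apply/measurable_EFinP.
- by move=> i j _ _ [z [[zi _] [zj _]]]; apply: (@cells_disjoint _ n); exists z.1.
- by move=> i; apply: measurableX; [exact: measurable_cell | exact: measurable_itv].
apply: eq_big_nat => i /andP[_ i_lt].
have cell_row : cell i `*` `[0, 1]%classic = \big[setU/set0]_(0 <= j < n) (cell i `*` cell j).
  by rewrite big_setUXr big_setU_cell // grid_prefix_n.
rewrite cell_row integral_bigsetU_EFin ?iota_uniq //.
- by move=> j k _ _ [z [[_ zj] [_ zk]]]; apply: (@cells_disjoint _ n); exists z.2.
- rewrite -cell_row; apply/measurable_EFinP; apply: (measurable_funS _ _ mf).
    by apply: measurableX; exact: measurable_itv.
  by move=> z [zi z01]; split => //; exact: cell_sub01 i_lt _ zi.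
Qed.

Lemma sum_cell_masses_le1 :
  \sum_(0 <= i < n) \sum_(0 <= j < n) fine (mu (cell i `*` cell j)) <= 1.
Proof.
have int1 A : measurable A -> (\int[mu]_(z in A) (cst (1 : R) z)%:E)%E = mu A.
  by move=> mA; rewrite -[RHS]mul1e -integral_cst.
have msq : measurable sq by apply: measurableX; exact: measurable_itv.
have := integral_unit_sq_cells (measurable_cst (1 : R)).
under eq_bigr => i _ do under eq_bigr => j _ do
  rewrite int1 // -[mu _]fineK ?measure_fin_num //.
rewrite int1 // -[mu _]fineK ?measure_fin_num //.
under eq_bigr do rewrite sumEFin.
rewrite sumEFin => -[<-]; rewrite -lee_fin fineK ?measure_fin_num // -mu_setT.
by rewrite le_measure ?inE.
Qed.

Section Integrand.
Variable f : R -> R -> R.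
Hypotheses (mf : measurable_fun sq (fun z => f z.1 z.2))
  (f_nonneg : sq_nonneg f) (f_lip : sq_lipschitz f).

Lemma integral_cell_near_corner i j : (i < n)%N -> (j < n)%N ->
  (\int[mu]_(z in cell i `*` cell j) (f z.1 z.2)%:E)%E \is a fin_num /\
  `|fine (\int[mu]_(z in cell i `*` cell j) (f z.1 z.2)%:E)%E -
    f (grid i.+1) (grid j.+1) * fine (mu (cell i `*` cell j))| <=
  2 / n%:R * fine (mu (cell i `*` cell j)).
Proof.
move=> i_lt j_lt; apply: integral_near_const => // [|[x y] [/= xi yj]|[x y] [/= xi yj]].
- apply: (measurable_funS _ _ mf); first by apply: measurableX; exact: measurable_itv.
  by move=> z [zi zj]; split; [exact: cell_sub01 i_lt _ zi | exact: cell_sub01 j_lt _ zj].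
- have [x01 _] := cell_near_grid n_gt0 i_lt xi; have [y01 _] := cell_near_grid n_gt0 j_lt yj.
  exact: f_nonneg.
- have [x01 xg] := cell_near_grid n_gt0 i_lt xi; have [y01 yg] := cell_near_grid n_gt0 j_lt yj.
  have gi01 : 0 <= grid i.+1 <= 1 by rewrite grid_ge0 grid_le1.
  have gj01 : 0 <= grid j.+1 <= 1 by rewrite grid_ge0 grid_le1.
  apply: (le_trans (f_lip x01 y01 gi01 gj01)).
  by rewrite mulr_natl mulr2n lerD.
Qed.

Lemma Rintegral_near_cell_sum :
  `|Rintegral mu sq (fun z => f z.1 z.2) -
    \sum_(0 <= i < n) \sum_(0 <= j < n)
      f (grid i.+1) (grid j.+1) * fine (mu (cell i `*` cell j))| <= 2 / n%:R.
Proof.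
rewrite /Rintegral (integral_unit_sq_cells mf).
under eq_big_nat => i /andP[_ i_lt] do under eq_big_nat => j /andP[_ j_lt] do
  rewrite -(fineK (integral_cell_near_corner i_lt j_lt).1).
under eq_bigr do rewrite sumEFin.
rewrite sumEFin [fine _]/= -sumrB; apply: (le_trans (ler_norm_sum _ _ _)).
apply: (@le_trans _ _ (\sum_(0 <= i < n) \sum_(0 <= j < n)
    2 / n%:R * fine (mu (cell i `*` cell j)))).
  apply: ler_sum_nat => i /andP[_ i_lt]; rewrite -sumrB.
  apply: (le_trans (ler_norm_sum _ _ _)); apply: ler_sum_nat => j /andP[_ j_lt].
  exact: (integral_cell_near_corner i_lt j_lt).2.
under eq_bigr do rewrite -mulr_sumr.
rewrite -mulr_sumr; apply: ler_piMr; last exact: sum_cell_masses_le1.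
by apply: divr_ge0; exact: ler0n.
Qed.

End Integrand.

Variable C : R -> R -> R.
Hypothesis mu_rect : forall x y, 0 <= x <= 1 -> 0 <= y <= 1 ->
  mu (`[0, x] `*` `[0, y]) = (C x y)%:E.
Hypothesis C_grounded : grounded C.

Lemma fine_measure_cell i j : (i < n)%N -> (j < n)%N ->
  fine (mu (cell i `*` cell j)) =
  C_volume C (grid i) (grid i.+1) (grid j) (grid j.+1).
Proof.
move=> i_lt j_lt; have [C0y Cx0] := C_grounded.
have prefix_mass a b : (a <= n)%N -> (b <= n)%N ->
    fine (mu (grid_prefix n a `*` grid_prefix n b)) = C (grid a) (grid b).
  case: a b => [|a] [|b] a_le b_le /=; rewrite ?set0X ?setX0 ?measure0 ?grid0 ?C0y ?Cx0 //.
  by rewrite mu_rect ?grid_ge0 ?grid_le1.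
rewrite /cell (fine_measure_setXD mu_setT); try exact: measurable_grid_prefix;
  try exact: grid_prefix_sub (leqnSn _).
by have [i_le j_le] := (ltnW i_lt, ltnW j_lt); rewrite !prefix_mass.
Qed.

Lemma Rintegral_stieltjes_sum (f : R -> R -> R) :
  measurable_fun sq (fun z => f z.1 z.2) -> sq_nonneg f -> sq_lipschitz f ->
  `|Rintegral mu sq (fun z => f z.1 z.2) - stieltjes_sum n f C| <= 2 / n%:R.
Proof.
move=> mf f_nonneg f_lip; have := Rintegral_near_cell_sum mf f_nonneg f_lip.
congr (`|_ - _| <= _); apply: eq_big_nat => i /andP[_ i_lt].
by apply: eq_big_nat => j /andP[_ j_lt]; rewrite fine_measure_cell.
Qed.

End RiemannStieltjes.

Lemma stieltjes_sum_mixC {R : realType} n l (f g : R -> R -> R) :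
  l * stieltjes_sum n f f + (1 - l) * stieltjes_sum n g g -
    stieltjes_sum n (mixC l f g) (mixC l f g) =
  l * (1 - l) * stieltjes_sum n (fun x y => f x y - g x y) (fun x y => f x y - g x y).
Proof.
rewrite /stieltjes_sum !mulr_sumr -big_split -sumrB /=; apply: eq_bigr => i _.
rewrite !mulr_sumr -big_split -sumrB /=; apply: eq_bigr => j _.
by rewrite /C_volume /mixC; ring.
Qed.

Section MinMaxKernel.
Variables (R : realType) (h : nat -> R).

Definition minmax_kernel (a b : nat) : R := (minn a b)%:R * h (maxn a b).
Local Notation K := minmax_kernel.

Let K_volume i j := K i.+1 j.+1 * (K i.+1 j.+1 - K i j.+1 - K i.+1 j + K i j).

Let K_volume_sym i j : K_volume i j = K_volume j i.
Proof. by rewrite /K_volume /K !(minnC i) !(maxnC i) !(minnC i.+1) !(maxnC i.+1); ring. Qed.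

Let K_volume_below m j : (j < m)%N -> K_volume m j = (j.+1)%:R * (h m.+1 * (h m.+1 - h m)).
Proof.
move=> jm; have jm' := ltnW jm; have jS : (j.+1 <= m.+1)%N := jm'.
rewrite /K_volume /K (minn_idPr jS) (maxn_idPl jS) (minn_idPr jm) (maxn_idPl jm).
rewrite (minn_idPr (leqW jm')) (maxn_idPl (leqW jm')) (minn_idPr jm') (maxn_idPl jm').
by rewrite -natr1; ring.
Qed.

Let K_volume_diag m :
  K_volume m m = (m.+1)%:R * h m.+1 * ((m.+1)%:R * h m.+1 - 2 * m%:R * h m.+1 + m%:R * h m).
Proof.
rewrite /K_volume /K !minnn !maxnn (minn_idPr (leqnSn m)) (maxn_idPl (leqnSn m)).
by rewrite (minn_idPl (leqnSn m)) (maxn_idPr (leqnSn m)); ring.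
Qed.

(* Discrete analogue of int int K dK = int_0^1 t h(t)^2 dt
   for K(x, y) = min(x, y) h(max(x, y)). *)
Lemma sum_minmax_kernel_volume m :
  \sum_(0 <= i < m) \sum_(0 <= j < m)
    K i.+1 j.+1 * (K i.+1 j.+1 - K i j.+1 - K i.+1 j + K i j) =
  \sum_(0 <= k < m) (k.+1)%:R * h k.+1 ^+ 2.
Proof.
change (\sum_(0 <= i < m) \sum_(0 <= j < m) K_volume i j =
  \sum_(0 <= k < m) (k.+1)%:R * h k.+1 ^+ 2).
elim: m => [|m IH]; first by rewrite !big_geq.
rewrite big_nat_recr //=; under eq_bigr do rewrite big_nat_recr //=.
rewrite big_split /= IH big_nat_recr //= big_nat_recr //=.
have row : \sum_(0 <= j < m) K_volume m j =
    (\sum_(0 <= j < m) (j.+1)%:R) * (h m.+1 * (h m.+1 - h m)).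
  by rewrite mulr_suml; apply: eq_big_nat => j /andP[_ jm]; rewrite K_volume_below.
have col : \sum_(0 <= i < m) K_volume i m = \sum_(0 <= j < m) K_volume m j.
  by apply: eq_bigr => i _; rewrite K_volume_sym.
have gauss : \sum_(0 <= j < m) (j.+1)%:R = m%:R * (m.+1)%:R / 2 :> R.
  elim: (m) => [|k IHk]; first by rewrite big_geq // mul0r mul0r.
  by rewrite big_nat_recr //= IHk -!natr1; field.
by rewrite col row gauss K_volume_diag -natr1; field.
Qed.

End MinMaxKernel.

Lemma grid_sum_sqr_ge {R : realType} (n : nat) (u r c2 : R) (H : R -> R) :
  (0 < n)%N -> u <= 1 -> 0 < r -> r <= u / 2 -> 0 <= c2 -> 2 <= n%:R * r ->
  (forall x, u - r <= x <= u -> c2 <= H x ^+ 2) ->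
  r * u * c2 / 4 <= \sum_(0 <= k < n) (k.+1)%:R * H (grid R n k.+1) ^+ 2 / n%:R ^+ 2.
Proof.
move=> n_gt0 u_le1 r_gt0 ru c2_ge0 nr Hc2; have n_gt0R : 0 < n%:R :> R by rewrite ltr0n.
have u_gt0 : 0 < u by lra.
set K := Num.truncn (n%:R * (u - r)); set M := Num.truncn (n%:R * r).
have K_le : K%:R <= n%:R * (u - r) by rewrite truncn_le mulr_ge0 //; lra.
have K_gt : n%:R * (u - r) < K.+1%:R by exact: truncnS_gt.
have M_le : M%:R <= n%:R * r by rewrite truncn_le mulr_ge0 //; lra.
have M_gt : n%:R * r < M.+1%:R by exact: truncnS_gt.
have KM_le : (K + M <= n)%N.
  have : n%:R * u <= n%:R by rewrite ler_piMr // ltW.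
  by rewrite -(ler_nat R) natrD; lra.
have term_ge0 k : 0 <= (k.+1)%:R * H (grid R n k.+1) ^+ 2 / n%:R ^+ 2.
  apply: divr_ge0; last exact/exprn_ge0/ler0n.
  by apply: mulr_ge0; [exact: ler0n | exact: sqr_ge0].
rewrite (big_cat_nat (leq0n K) (leq_trans (leq_addr M K) KM_le)) /=.
rewrite (big_cat_nat (leq_addr M K) KM_le) /=.
have window : \sum_(K <= k < K + M) u * c2 / (2 * n%:R) <=
    \sum_(K <= k < K + M) (k.+1)%:R * H (grid R n k.+1) ^+ 2 / n%:R ^+ 2.
  apply: ler_sum_nat => k /andP[Kk kKM].
  have k_ge : K.+1%:R <= k.+1%:R :> R by rewrite ler_nat.
  have k_le : k.+1%:R <= K%:R + M%:R :> R by rewrite -natrD ler_nat.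
  have grid_k : u - r <= grid R n k.+1 <= u.
    by rewrite /grid ler_pdivlMr // ler_pdivrMr //; apply/andP; split; nra.
  have := Hc2 _ grid_k; rewrite ler_pdivlMr ?exprn_gt0 //.
  have -> : u * c2 / (2 * n%:R) * n%:R ^+ 2 = u * c2 * n%:R / 2 by field; rewrite gt_eqF.
  have : n%:R * r <= n%:R * (u / 2) by rewrite ler_pM2l.
  have : 0 <= k.+1%:R :> R by exact: ler0n.
  nra.
rewrite sumr_const_nat addKn -[_ *+ M]mulr_natl in window.
have : r * u * c2 / 4 <= M%:R * (u * c2 / (2 * n%:R)).
  have -> : M%:R * (u * c2 / (2 * n%:R)) = (M%:R / n%:R) * (u * c2 / 2).
    by field; rewrite gt_eqF.
  have -> : r * u * c2 / 4 = r / 2 * (u * c2 / 2) by field.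
  by rewrite ler_wpM2r ?divr_ge0 ?mulr_ge0 ?ler0n ?(ltW u_gt0) // ler_pdivlMr //; nra.
move=> /le_trans /(_ window) bound.
apply: ler_wpDl; first by apply: sumr_ge0 => k _; exact: term_ge0.
by apply: ler_wpDr => //; apply: sumr_ge0 => k _; exact: term_ge0.
Qed.

Section SDeltaGap.
Variables (R : realType) (d1 d2 : R -> R).
Hypotheses (d1LSL : in_DLSL d1) (d2LSL : in_DLSL d2).
Local Notation gap x := (slope d1 x - slope d2 x).
Local Notation D := (fun x y => S_delta d1 x y - S_delta d2 x y).

Let d1D : in_D d1. Proof. by case: d1LSL. Qed.
Let d2D : in_D d2. Proof. by case: d2LSL. Qed.

(* On this window each slope moves by at most (u - x) / x <= c / 4,
   so the gap stays above c / 2. *)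
Lemma slope_gap_sqr_ge u x : 0 < u -> u <= 1 ->
  u - `|gap u| * u / 8 <= x <= u -> `|gap u| ^+ 2 / 4 <= gap x ^+ 2.
Proof.
move=> u_gt0 u_le1; set c := `|gap u|; move=> /andP[xl xu].
have u01 : 0 <= u <= 1 by rewrite ltW.
have /andP[a0 a1] := slope_in01 d1D u01; have /andP[b0 b1] := slope_in01 d2D u01.
have c_le1 : c <= 1 by rewrite /c ler_norml; apply/andP; split; lra.
have cu_le : c * u <= u by rewrite ler_piMl // ltW.
have x_gt0 : 0 < x by lra.
have /andP[e0 e1] := slope_increment d1LSL x_gt0 xu u_le1.
have /andP[g0 g1] := slope_increment d2LSL x_gt0 xu u_le1.
have step : (u - x) / x <= c / 4 by rewrite ler_pdivrMr //; nra.
have near : `|gap u - gap x| <= c / 4 by rewrite ler_norml; apply/andP; split; lra.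
have := ler_normD (gap u - gap x) (gap x); rewrite subrK -/c => tri.
rewrite -[X in _ <= X]real_normK ?num_real // (_ : c ^+ 2 / 4 = (c / 2) ^+ 2); last by field.
by rewrite ler_sqr ?nnegrE ?divr_ge0 //; lra.
Qed.

Lemma stieltjes_sum_S_delta_gap n : (0 < n)%N ->
  stieltjes_sum n D D = \sum_(0 <= k < n) (k.+1)%:R * gap (grid R n k.+1) ^+ 2 / n%:R ^+ 2.
Proof.
move=> n_gt0; have n_neq0 : n%:R != 0 :> R by rewrite pnatr_eq0 -lt0n.
have Dgrid a b : D (grid R n a) (grid R n b) =
    n%:R^-1 * minmax_kernel (fun k => gap (grid R n k)) a b.
  by rewrite !S_delta_grid // /minmax_kernel /grid; ring.
rewrite -mulr_suml -(sum_minmax_kernel_volume (fun k => gap (grid R n k))) mulr_suml.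
apply: eq_bigr => i _; rewrite mulr_suml; apply: eq_bigr => j _.
by rewrite /C_volume !Dgrid; field.
Qed.

Lemma stieltjes_sum_S_delta_gap_ge : (exists u, 0 <= u <= 1 /\ d1 u <> d2 u) ->
  exists2 ka : R, 0 < ka &
    exists2 N, (0 < N)%N & forall n, (N <= n)%N -> ka <= stieltjes_sum n D D.
Proof.
move=> [u [/andP[u_ge0 u_le1] d12u]].
have u_gt0 : 0 < u.
  by rewrite lt_neqAle u_ge0 andbT; apply/eqP => u0; apply: d12u; rewrite -u0 !in_D0.
set c := `|gap u|; set r := c * u / 8.
have c_gt0 : 0 < c.
  rewrite normr_gt0 /slope -mulrBl; apply: mulf_neq0; last by rewrite invr_eq0 gt_eqF.
  by rewrite subr_eq0; apply/eqP.
have c_le1 : c <= 1.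
  have u01 : 0 <= u <= 1 by rewrite u_ge0.
  have /andP[a0 a1] := slope_in01 d1D u01; have /andP[b0 b1] := slope_in01 d2D u01.
  by rewrite /c ler_norml; apply/andP; split; lra.
have r_gt0 : 0 < r by rewrite /r !mulr_gt0.
exists (r * u * (c ^+ 2 / 4) / 4); first by rewrite !mulr_gt0 ?exprn_gt0.
exists (Num.truncn (2 / r)).+1 => // n Nn.
have n_gt0 : (0 < n)%N by apply: leq_trans Nn.
have nr : 2 <= n%:R * r.
  rewrite -ler_pdivrMr //; apply: le_trans (ltW (truncnS_gt _)) _.
  by rewrite ler_nat.
rewrite stieltjes_sum_S_delta_gap //.
apply: (grid_sum_sqr_ge (u := u) (r := r) (H := fun x => gap x)) => //.
- by rewrite /r; nra.
- by rewrite divr_ge0 ?sqr_ge0.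
- by move=> x; apply: slope_gap_sqr_ge.
Qed.

End SDeltaGap.

Section KendallSums.
Variables (R : realType) (n : nat).
Hypothesis n_gt0 : (0 < n)%N.
Variable mu : {measure set (R * R) -> \bar R}.

Lemma Rintegral_S_delta_stieltjes_sum d : in_DLSL d -> assoc_measure mu (S_delta d) ->
  `|Rintegral mu (@unit_sq R) (fun z => S_delta d z.1 z.2) -
    stieltjes_sum n (S_delta d) (S_delta d)| <= 2 / n%:R.
Proof.
move=> dLSL [muT muC]; have dD : in_D d by case: dLSL.
apply: Rintegral_stieltjes_sum => //; first exact: S_delta_grounded.
- exact: measurable_S_delta.
- exact: S_delta_nonneg.
- exact: S_delta_lipschitz.
Qed.

Lemma Rintegral_mixC_stieltjes_sum l d1 d2 : 0 <= l <= 1 -> in_DLSL d1 -> in_DLSL d2 ->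
  let C := mixC l (S_delta d1) (S_delta d2) in assoc_measure mu C ->
  `|Rintegral mu (@unit_sq R) (fun z => C z.1 z.2) - stieltjes_sum n C C| <= 2 / n%:R.
Proof.
move=> l01 d1LSL d2LSL C [muT muC].
have [d1D d2D] : in_D d1 /\ in_D d2 by case: d1LSL; case: d2LSL.
apply: Rintegral_stieltjes_sum => //.
- by apply: mixC_grounded; exact: S_delta_grounded.
- by apply: measurable_funD; apply: measurable_funM => //; exact: measurable_S_delta.
- by apply: mixC_nonneg => //; exact: S_delta_nonneg.
- by apply: mixC_lipschitz => //; exact: S_delta_lipschitz.
Qed.

End KendallSums.

Lemma convex_approx_gap {R : realFieldType} (l e x1 x2 x q1 q2 q : R) : 0 <= l <= 1 ->
  `|x1 - q1| <= e -> `|x2 - q2| <= e -> `|x - q| <= e ->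
  l * q1 + (1 - l) * q2 - q - 2 * e <= l * x1 + (1 - l) * x2 - x.
Proof.
move=> /andP[l0 l1]; rewrite !ler_norml => /andP[a1 b1] /andP[a2 b2] /andP[a b].
have : - (l * e) <= l * (x1 - q1) by rewrite -mulrN ler_wpM2l.
have : - ((1 - l) * e) <= (1 - l) * (x2 - q2) by rewrite -mulrN ler_wpM2l ?subr_ge0.
lra.
Qed.

Theorem mainTheorem8 (R : realType) (d1 d2 : R -> R) (l : R)
  (mu1 mu2 mu : {measure set (R * R)%type -> \bar R}) :
  in_DLSL d1 -> in_DLSL d2 ->
  (exists u, 0 <= u <= 1 /\ d1 u <> d2 u) ->
  0 < l < 1 ->
  assoc_measure mu1 (S_delta d1) ->
  assoc_measure mu2 (S_delta d2) ->
  assoc_measure mu (mixC l (S_delta d1) (S_delta d2)) ->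
  kendall_tau mu (mixC l (S_delta d1) (S_delta d2)) <
    l * kendall_tau mu1 (S_delta d1) + (1 - l) * kendall_tau mu2 (S_delta d2).
Proof.
move=> d1LSL d2LSL d12 /andP[l_gt0 l_lt1] A1 A2 A.
have l01 : 0 <= l <= 1 by rewrite !ltW.
have [ka ka_gt0 [N N_gt0 gapN]] := stieltjes_sum_S_delta_gap_ge d1LSL d2LSL d12.
set P := l * (1 - l); have P_gt0 : 0 < P by rewrite mulr_gt0 ?subr_gt0.
have Pka_gt0 : 0 < P * ka by rewrite mulr_gt0.
pose n := maxn N (Num.truncn (4 / (P * ka))).+1.
have n_gt0 : (0 < n)%N by rewrite leq_max N_gt0.
have err_small : 4 / n%:R < P * ka.
  rewrite ltr_pdivrMr ?ltr0n // mulrC -ltr_pdivrMr //.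
  by apply: lt_le_trans (truncnS_gt _) _; rewrite ler_nat leq_maxr.
have := convex_approx_gap l01 (Rintegral_S_delta_stieltjes_sum n_gt0 d1LSL A1)
  (Rintegral_S_delta_stieltjes_sum n_gt0 d2LSL A2)
  (Rintegral_mixC_stieltjes_sum n_gt0 l01 d1LSL d2LSL A).
have := ler_wpM2l (ltW P_gt0) (gapN n (leq_maxl _ _)).
rewrite /kendall_tau stieltjes_sum_mixC -/P.
have e4 : 4 / n%:R = 2 * (2 / n%:R) :> R by rewrite mulrA -natrM.
lra.
Qed.
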